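(* For every $m\ge1$ and every probability mass function $(g_k)_{k\in\mathbb Z}$ of a sum of $m$ independent Bernoulli random variables (extended by $0$ outside $\{0,\ldots,m\}$), the following hold for all $k\in\mathbb Z$: $$g_k^2g_{k+1}-2g_{k+1}^2g_{k-1}+g_{k+2}g_kg_{k-1}\ge0,$$ $$g_k^3-g_{k-1}g_kg_{k+1}-g_{k-1}^2g_{k+2}+g_{k-2}g_kg_{k+2}\ge0,$$ $$g_k^3-g_{k-1}g_kg_{k+1}-g_{k+1}^2g_{k-2}+g_{k-2}g_kg_{k+2}\ge0,$$ $$2g_k^3-3g_{k-1}g_kg_{k+1}+g_{k-1}^2g_{k+2}\ge0,$$ $$2g_k^3-3g_{k-1}g_kg_{k+1}+g_{k+1}^2g_{k-2}\ge0,$$ $$2g_k^2g_{k-2}-3g_{k-2}g_{k-1}g_{k+1}+g_{k+1}g_kg_{k-3}\ge0.$$ *)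

From HB Require Import structures.
From mathcomp Require Import all_boot all_order all_algebra.
Set Implicit Arguments. Unset Strict Implicit. Unset Printing Implicit Defensive.
Import Order.TTheory GRing.Theory Num.Theory.
Local Open Scope ring_scope.

(* Probability mass function of the sum of m independent Bernoulli(p i)
   random variables, computed on the product space {0,1}^m:
   poibin p k = P(X_0 + ... + X_{m-1} = k)
              = sum over outcomes x with #{i | x i} = k of
                prod_i (if x i then p i else 1 - p i).
   Indexed by k : int; automatically 0 outside {0,...,m}. *)
Definition poibin (R : realFieldType) (m : nat) (p : 'I_m -> R) (k : int) : R :=
  \sum_(x : {ffun 'I_m -> bool} | (#|[set i | x i]| : int) == k)
     \prod_(i < m) (if x i then p i else 1 - p i).

From HB Require Import structures.
From mathcomp Require Import all_boot all_order all_algebra.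
From mathcomp Require Import ring lra zify.
From Stdlib Require Import FunctionalExtensionality.
Import Order.TTheory GRing.Theory Num.Theory.
Set Implicit Arguments. Unset Strict Implicit. Unset Printing Implicit Defensive.
Local Open Scope ring_scope.

(* The law g is obtained from the unit mass [delta] at 0 by m convolutions with
   Bernoulli laws, g' i = q * g i + p * g (i - 1) with q = 1 - p.  We isolate a
   property of sequences g : int -> R, [admissible], which holds for [delta] and
   is preserved by every such convolution with q, p >= 0.  It consists of
   nonnegativity, absence of internal zeros, nonnegativity of the 2x2 and 3x3
   Toeplitz minors (PF2, PF3), and nonnegativity of two cubic forms [form1],
   [form2] on every window of g and of its reflection [rev g].

   The heart is the preservation of the cubic forms: on a window of g' each
   form is a cubic polynomial in (q, p) whose extreme coefficients are the form
   on windows of g, and whose two mixed coefficients are nonnegative by explicit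
   certificates: multiplied by a positive value of g they are nonnegative
   combinations of the invariants, and when that value vanishes the absence of
   internal zeros kills the remaining terms.  Translations [shift] reduce every
   window statement to the window around 0, and reflection halves the work. *)

Section PoissonBinomialInequalities.
Variable R : realFieldType.

(* The recursion g_m = bern_conv (1 - p_0) p_0 g_(m-1), obtained by splitting
   each outcome x : {0,1}^(m+1) into its first coordinate and the rest. *)

Definition fcons (m : nat) (b : bool) (y : {ffun 'I_m -> bool}) :
    {ffun 'I_m.+1 -> bool} :=
  [ffun i => if unlift ord0 i is Some j then y j else b].

Lemma fcons0 m b (y : {ffun 'I_m -> bool}) : fcons b y ord0 = b.
Proof. by rewrite ffunE unlift_none. Qed.

Lemma fcons_lift m b (y : {ffun 'I_m -> bool}) j : fcons b y (lift ord0 j) = y j.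
Proof. by rewrite ffunE liftK. Qed.

Lemma fcons_bij m : bijective (fun c : bool * {ffun 'I_m -> bool} => fcons c.1 c.2).
Proof.
exists (fun x : {ffun 'I_m.+1 -> bool} => (x ord0, [ffun j => x (lift ord0 j)])).
  by move=> [b y]; rewrite /= fcons0; congr pair; apply/ffunP=> j; rewrite ffunE fcons_lift.
move=> x; apply/ffunP=> i; rewrite ffunE.
by case: unliftP => [j ->|->]; rewrite ?ffunE.
Qed.

Lemma card_fcons m b (y : {ffun 'I_m -> bool}) :
  #|[set i | fcons b y i]| = (b + #|[set j | y j]|)%N.
Proof.
rewrite -!sum1_card big_mkcond [in RHS]big_mkcond /= big_ord_recl !inE fcons0.
by congr (_ + _)%N; apply: eq_bigr => j _; rewrite !inE fcons_lift.
Qed.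

Lemma prod_fcons m (p : 'I_m.+1 -> R) b (y : {ffun 'I_m -> bool}) :
  \prod_(i < m.+1) (if fcons b y i then p i else 1 - p i) =
  (if b then p ord0 else 1 - p ord0) *
  \prod_(j < m) (if y j then p (lift ord0 j) else 1 - p (lift ord0 j)).
Proof.
by rewrite big_ord_recl fcons0; congr (_ * _); apply: eq_bigr => j _; rewrite fcons_lift.
Qed.

Lemma poibin_rec (m : nat) (p : 'I_m.+1 -> R) (k : int) :
  poibin p k = (1 - p ord0) * poibin (fun j => p (lift ord0 j)) k
             + p ord0 * poibin (fun j => p (lift ord0 j)) (k - 1).
Proof.
rewrite /poibin (reindex _ (onW_bij _ (fcons_bij m))) /=.
pose F b y := if (#|[set i | fcons b y i]| : int) == k
  then \prod_(i < m.+1) (if fcons b y i then p i else 1 - p i) else 0.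
rewrite big_mkcond -(pair_bigA _ F) big_bool /= addrC !big_distrr /=.
congr (_ + _); rewrite [RHS]big_mkcond; apply: eq_bigr => y _;
  rewrite /F card_fcons prod_fcons.
- by rewrite add0n; case: ifP; rewrite ?mulr0.
- by rewrite PoszD addrC -subr_eq; case: ifP; rewrite ?mulr0.
Qed.

Lemma poibin_nil (p : 'I_0 -> R) (k : int) : poibin p k = if k == 0 then 1 else 0.
Proof.
have card0 (x : {ffun 'I_0 -> bool}) : #|[set i | x i]| = 0%N.
  by apply/eqP; rewrite -leqn0 (leq_trans (max_card _)) ?card_ord.
rewrite /poibin; under eq_bigl => x do rewrite card0.
under eq_bigr => x _ do rewrite big_ord0.
case: (k =P 0) => [->|nk].
  by rewrite (eq_bigl xpredT) // sumr_const card_ffun card_ord expn0.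
by rewrite big_pred0 // => x; apply/eqP => h; apply: nk; rewrite -h.
Qed.

(* Polynomial identities and inequalities in real variables.  A window of a
   sequence around 0 is written t, s, u, v, w, z for the values at -3 .. 2. *)

Definition det3 (m11 m12 m13 m21 m22 m23 m31 m32 m33 : R) : R :=
  m11 * m22 * m33 - m11 * m23 * m32 - m12 * m21 * m33
  + m12 * m23 * m31 + m13 * m21 * m32 - m13 * m22 * m31.

Lemma det3_diag_ge0 m11 m12 m13 m21 m22 m23 m31 m32 m33 :
  0 <= m11 * m22 * m33 -> m12 * m21 = 0 -> m13 * m21 = 0 ->
  m12 * m31 = 0 -> m13 * m31 = 0 -> m23 * m32 = 0 ->
  0 <= det3 m11 m12 m13 m21 m22 m23 m31 m32 m33.
Proof.
move=> d e1 e2 e3 e4 e5.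
have -> : det3 m11 m12 m13 m21 m22 m23 m31 m32 m33 = m11 * m22 * m33 - m11 * (m23 * m32)
    - m12 * m21 * m33 + m12 * m31 * m23 + m13 * m21 * m32 - m13 * m31 * m22.
  by rewrite /det3; ring.
by rewrite e1 e2 e3 e4 e5 !(mulr0, mul0r, subr0, addr0).
Qed.

Definition form1 (u v w z : R) : R := v ^+ 2 * w - 2 * w ^+ 2 * u + z * v * u.
Definition form2 (s u v w z : R) : R := v ^+ 3 - u * v * w - u ^+ 2 * z + s * v * z.

(* The mixed coefficients of the forms on a Bernoulli convolution. *)
Definition form1_mix1 (s u v w z : R) : R :=
  v ^+ 3 - u * v * w - 2 * s * w ^+ 2 + u ^+ 2 * z + s * v * z.
Definition form1_mix2 (s u v w z : R) : R :=
  2 * u ^+ 2 * w - 3 * s * v * w + s * u * z.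
Definition form2_mix1 (t s u v w z : R) : R :=
  2 * u * v ^+ 2 - 2 * u ^+ 2 * w - s * u * z + t * v * z.
Definition form2_mix2 (t s u v w z : R) : R :=
  2 * u ^+ 2 * v - 2 * s * u * w - s * v ^+ 2 - s ^+ 2 * z + t * u * z + t * v * w.

Lemma form1_conv (q p s u v w z : R) :
  form1 (q * u + p * s) (q * v + p * u) (q * w + p * v) (q * z + p * w) =
  q ^+ 3 * form1 u v w z + q ^+ 2 * p * form1_mix1 s u v w z
  + q * p ^+ 2 * form1_mix2 s u v w z + p ^+ 3 * form1 s u v w.
Proof. by rewrite /form1 /form1_mix1 /form1_mix2; ring. Qed.

Lemma form2_conv (q p t s u v w z : R) :
  form2 (q * s + p * t) (q * u + p * s) (q * v + p * u) (q * w + p * v) (q * z + p * w) =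
  q ^+ 3 * form2 s u v w z + q ^+ 2 * p * form2_mix1 t s u v w z
  + q * p ^+ 2 * form2_mix2 t s u v w z + p ^+ 3 * form2 t s u v w.
Proof. by rewrite /form2 /form2_mix1 /form2_mix2; ring. Qed.

(* Certificates for the mixed coefficients.  The last hypothesis of each is what
   the absence of internal zeros gives when the multiplier vanishes. *)
Lemma form1_mix1_ge0 (s u v w z : R) : 0 <= s -> 0 <= u -> 0 <= v -> 0 <= w ->
  0 <= form1 u v w z -> 0 <= form1 s u v w -> 0 <= det3 v u s w v u z w v ->
  (u = 0 -> s = 0 \/ [/\ v = 0, w = 0 & z = 0]) ->
  0 <= form1_mix1 s u v w z.
Proof.
move=> s0 + v0 w0 F0 F1 D; rewrite le0r => /predU1P[u_eq0 | u_pos] Z.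
  by case: (Z u_eq0) => [-> | [-> -> ->]]; rewrite /form1_mix1 u_eq0; nra.
have E : u * form1_mix1 s u v w z =
    2 * s * form1 u v w z + u * det3 v u s w v u z w v + w * form1 s u v w.
  by rewrite /form1_mix1 /form1 /det3; ring.
by rewrite -(pmulr_rge0 _ u_pos) E !addr_ge0 ?mulr_ge0 ?ler0n ?(ltW u_pos).
Qed.

Lemma form1_mix2_ge0 (s u v w z : R) : 0 <= s -> 0 <= v -> 0 <= w ->
  0 <= form1 u v w z -> 0 <= form1 s u v w ->
  (v = 0 -> (s = 0 /\ u = 0) \/ (w = 0 /\ z = 0)) ->
  0 <= form1_mix2 s u v w z.
Proof.
move=> s0 + w0 F0 F1; rewrite le0r => /predU1P[v_eq0 | v_pos] Z.
  by case: (Z v_eq0) => [[-> ->]|[-> ->]]; rewrite /form1_mix2 v_eq0; lra.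
have E : v * form1_mix2 s u v w z = 2 * w * form1 s u v w + s * form1 u v w z.
  by rewrite /form1_mix2 /form1; ring.
by rewrite -(pmulr_rge0 _ v_pos) E !addr_ge0 ?mulr_ge0 ?ler0n.
Qed.

Lemma form2_mix1_ge0 (t s u v w z : R) : 0 <= s -> 0 <= u -> 0 <= z ->
  s * v <= u * u -> u * w <= v * v ->
  0 <= form2 s u v w z -> 0 <= form1 v u s t ->
  (u = 0 -> (t = 0 /\ s = 0) \/ [/\ v = 0, w = 0 & z = 0]) ->
  0 <= form2_mix1 t s u v w z.
Proof.
move=> s0 + z0; rewrite -[s * v <= _]subr_ge0 -[u * w <= _]subr_ge0 => + P1 P2 F0 F1.
rewrite le0r => /predU1P[u_eq0 | u_pos] Z.
  by case: (Z u_eq0) => [[-> ->]|[-> -> ->]]; rewrite /form2_mix1 u_eq0; lra.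
have E : u * form2_mix1 t s u v w z = 2 * ((u * u - s * v) * (v * v - u * w))
    + 2 * s * form2 s u v w z + z * form1 v u s t.
  by rewrite /form2_mix1 /form2 /form1; ring.
by rewrite -(pmulr_rge0 _ u_pos) E !addr_ge0 ?mulr_ge0 ?ler0n.
Qed.

Lemma form2_mix2_ge0 (t s u v w z : R) : 0 <= s -> 0 <= u -> 0 <= v ->
  t * u <= s * s -> u * z <= v * w ->
  0 <= form2 t s u v w -> 0 <= form1 w v u s ->
  (u = 0 -> (t = 0 /\ s = 0) \/ [/\ v = 0, w = 0 & z = 0]) ->
  0 <= form2_mix2 t s u v w z.
Proof.
move=> s0 + v0; rewrite -[t * u <= _]subr_ge0 -[u * z <= _]subr_ge0 => + P1 P2 F0 F1.
rewrite le0r => /predU1P[u_eq0 | u_pos] Z.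
  by case: (Z u_eq0) => [[-> ->]|[-> -> ->]]; rewrite /form2_mix2 u_eq0; lra.
have E : u * form2_mix2 t s u v w z = 2 * v * form2 t s u v w
    + s * form1 w v u s + (s * s - t * u) * (v * w - u * z).
  by rewrite /form2_mix2 /form2 /form1; ring.
by rewrite -(pmulr_rge0 _ u_pos) E !addr_ge0 ?mulr_ge0.
Qed.

Implicit Types (g h : int -> R) (q p : R).

Definition shift (a : int) g : int -> R := fun i => g (a + i).
Definition rev g : int -> R := fun i => g (- i).
Definition delta : int -> R := fun i => if i == 0 then 1 else 0.
Definition bern_conv q p g : int -> R := fun i => q * g i + p * g (i - 1).

Lemma shift_shift a b g : shift a (shift b g) = shift (b + a) g.
Proof. by apply: functional_extensionality => i; rewrite /shift addrA. Qed.

Lemma rev_rev g : rev (rev g) = g.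
Proof. by apply: functional_extensionality => i; rewrite /rev opprK. Qed.

Lemma rev_shift a g : rev (shift a g) = shift (- a) (rev g).
Proof. by apply: functional_extensionality => i; rewrite /rev /shift opprD opprK. Qed.

Lemma rev_delta : rev delta = delta.
Proof. by apply: functional_extensionality => i; rewrite /rev /delta oppr_eq0. Qed.

Lemma shift_bern_conv a q p g : shift a (bern_conv q p g) = bern_conv q p (shift a g).
Proof. by apply: functional_extensionality => i; rewrite /shift /bern_conv addrA. Qed.

Lemma rev_bern_conv q p g : rev (bern_conv q p g) = shift 1 (bern_conv p q (rev g)).
Proof.
apply: functional_extensionality => i; rewrite /rev /shift /bern_conv addrC.
by congr (_ + _); congr (_ * g _); lia.
Qed.

Definition nonneg g := forall i, 0 <= g i.
Definition no_internal_zero g := forall i, g i = 0 ->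
  (forall j, j <= i -> g j = 0) \/ (forall j, i <= j -> g j = 0).
Definition PF2 g := forall w x y z : int, w + z = x + y -> w < x -> w < y ->
  g w * g z <= g x * g y.
Definition minor3 g (a1 a2 a3 c1 c2 c3 : int) : R :=
  det3 (g (a1 - c1)) (g (a1 - c2)) (g (a1 - c3))
       (g (a2 - c1)) (g (a2 - c2)) (g (a2 - c3))
       (g (a3 - c1)) (g (a3 - c2)) (g (a3 - c3)).
Definition PF3 g := forall a1 a2 a3 c1 c2 c3 : int,
  a1 < a2 -> a2 < a3 -> c1 < c2 -> c2 < c3 -> 0 <= minor3 g a1 a2 a3 c1 c2 c3.

Definition form1_win h : R := form1 (h (-1)) (h 0) (h 1) (h 2).
Definition form2_win h : R := form2 (h (-2)) (h (-1)) (h 0) (h 1) (h 2).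
Definition along (F : (int -> R) -> R) g := forall a, 0 <= F (shift a g).

Record admissible g : Prop := Admissible {
  adm_nonneg : nonneg g;
  adm_nz : no_internal_zero g;
  adm_PF2 : PF2 g;
  adm_PF3 : PF3 g;
  adm_form1 : along form1_win g;
  adm_form1_rev : along form1_win (rev g);
  adm_form2 : along form2_win g;
  adm_form2_rev : along form2_win (rev g) }.

Lemma nz_shift a g : no_internal_zero g -> no_internal_zero (shift a g).
Proof. by move=> H i /H[L|Rt]; [left|right] => j hj; [apply: L|apply: Rt]; lia. Qed.

Lemma nz_rev g : no_internal_zero g -> no_internal_zero (rev g).
Proof. by move=> H i /H[L|Rt]; [right|left] => j hj; [apply: L|apply: Rt]; lia. Qed.

Lemma PF2_shift a g : PF2 g -> PF2 (shift a g).
Proof. by move=> H w x y z e hx hy; apply: H; lia. Qed.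

Lemma PF2_rev g : PF2 g -> PF2 (rev g).
Proof.
by move=> H w x y z e hx hy; rewrite /rev mulrC [g (- x) * _]mulrC; apply: H; lia.
Qed.

Lemma PF3_shift b g : PF3 g -> PF3 (shift b g).
Proof. by move=> H a1 a2 a3 c1 c2 c3 *; rewrite /minor3 /shift !addrA; apply: H; lia. Qed.

(* Reflection transposes the Toeplitz matrix. *)
Lemma PF3_rev g : PF3 g -> PF3 (rev g).
Proof.
move=> H a1 a2 a3 c1 c2 c3 h1 h2 h3 h4.
have -> : minor3 (rev g) a1 a2 a3 c1 c2 c3 = minor3 g c1 c2 c3 a1 a2 a3.
  by rewrite /minor3 /det3 /rev !opprB; ring.
exact: H.
Qed.

Lemma along_shift F a g : along F g -> along F (shift a g).
Proof. by move=> H b; rewrite shift_shift. Qed.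

Lemma admissible_shift a g : admissible g -> admissible (shift a g).
Proof.
case=> g0 nz pf2 pf3 t1 t1r t2 t2r; split; rewrite ?rev_shift.
- by move=> i; apply: g0.
- exact: nz_shift.
- exact: PF2_shift.
- exact: PF3_shift.
all: exact: along_shift.
Qed.

Lemma admissible_rev g : admissible g -> admissible (rev g).
Proof.
case=> g0 nz pf2 pf3 t1 t1r t2 t2r; split; rewrite ?rev_rev //.
- by move=> i; apply: g0.
- exact: nz_rev.
- exact: PF2_rev.
- exact: PF3_rev.
Qed.

Lemma form1_win_mix1_ge0 h : admissible h ->
  0 <= form1_mix1 (h (-2)) (h (-1)) (h 0) (h 1) (h 2).
Proof.
move=> Hh; apply: form1_mix1_ge0; rewrite ?(adm_nonneg Hh) //.
- exact: adm_form1 Hh 0.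
- exact: adm_form1 Hh (-1).
- by apply: (adm_PF3 Hh (a1 := 0) (a2 := 1) (a3 := 2) (c1 := 0) (c2 := 1) (c3 := 2)).
- by move=> /(adm_nz Hh)[L|Rt]; [left; apply: L | right; split; apply: Rt].
Qed.

Lemma form1_win_mix2_ge0 h : admissible h ->
  0 <= form1_mix2 (h (-2)) (h (-1)) (h 0) (h 1) (h 2).
Proof.
move=> Hh; apply: form1_mix2_ge0; rewrite ?(adm_nonneg Hh) //.
- exact: adm_form1 Hh 0.
- exact: adm_form1 Hh (-1).
- by move=> /(adm_nz Hh)[L|Rt]; [left; split; apply: L | right; split; apply: Rt].
Qed.

Lemma form2_win_mix1_ge0 h : admissible h ->
  0 <= form2_mix1 (h (-3)) (h (-2)) (h (-1)) (h 0) (h 1) (h 2).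
Proof.
move=> Hh; apply: form2_mix1_ge0; rewrite ?(adm_nonneg Hh) //; try by apply: (adm_PF2 Hh).
- exact: adm_form2 Hh 0.
- exact: adm_form1_rev Hh 1.
- by move=> /(adm_nz Hh)[L|Rt]; [left; split; apply: L | right; split; apply: Rt].
Qed.

Lemma form2_win_mix2_ge0 h : admissible h ->
  0 <= form2_mix2 (h (-3)) (h (-2)) (h (-1)) (h 0) (h 1) (h 2).
Proof.
move=> Hh; apply: form2_mix2_ge0; rewrite ?(adm_nonneg Hh) //; try by apply: (adm_PF2 Hh).
- exact: adm_form2 Hh (-1).
- exact: adm_form1_rev Hh 0.
- by move=> /(adm_nz Hh)[L|Rt]; [left; split; apply: L | right; split; apply: Rt].
Qed.

Section BernoulliConvolution.
Variables q p : R.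
Hypotheses (q_ge0 : 0 <= q) (p_ge0 : 0 <= p).

Lemma cubic_ge0 (a b c d : R) : 0 <= a -> 0 <= b -> 0 <= c -> 0 <= d ->
  0 <= q ^+ 3 * a + q ^+ 2 * p * b + q * p ^+ 2 * c + p ^+ 3 * d.
Proof. by move=> *; rewrite !addr_ge0 ?mulr_ge0 ?exprn_ge0. Qed.

Lemma nonneg_bern_conv g : nonneg g -> nonneg (bern_conv q p g).
Proof. by move=> g0 i; rewrite addr_ge0 ?mulr_ge0. Qed.

(* A zero of the convolution forces zeros of g at i and i - 1 (or q = 0, or
   p = 0), and the vanishing side of g carries over. *)
Lemma nz_bern_conv g : nonneg g -> no_internal_zero g ->
  no_internal_zero (bern_conv q p g).
Proof.
move=> g0 nz x /eqP; rewrite paddr_eq0 ?mulr_ge0 // !mulf_eq0.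
case/andP=> /orP[/eqP q0 | /eqP gx0] /orP[/eqP p0 | /eqP gx1].
- by left=> y _; rewrite /bern_conv q0 p0 !mul0r addr0.
- by case: (nz _ gx1) => Z; [left|right] => y hy;
    rewrite /bern_conv q0 mul0r add0r Z ?mulr0 //; lia.
- by case: (nz _ gx0) => Z; [left|right] => y hy;
    rewrite /bern_conv p0 mul0r addr0 Z ?mulr0.
- case: (nz _ gx0) => Z.
    by left=> y hy; rewrite /bern_conv !Z ?mulr0 ?addr0 //; lia.
  right=> y hy; rewrite /bern_conv Z // mulr0 add0r.
  case: (y =P x) => [->|ne]; first by rewrite gx1 mulr0.
  by rewrite Z ?mulr0 //; lia.
Qed.

(* The 2x2 minor of the convolution is a nonnegative combination of four
   2x2 minors of g. *)
Lemma PF2_bern_conv g : nonneg g -> PF2 g -> PF2 (bern_conv q p g).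
Proof.
move=> g0 H w x y z e hx hy; rewrite /bern_conv -subr_ge0.
have d00 := H w x y z e hx hy.
have d11 := H (w - 1) (x - 1) (y - 1) (z - 1) ltac:(lia) ltac:(lia) ltac:(lia).
have d10 := H (w - 1) (x - 1) y z ltac:(lia) ltac:(lia) ltac:(lia).
have d01 : g w * g (z - 1) <= g x * g (y - 1).
  case: (w =P y - 1) => [ew|ne]; last by apply: H; lia.
  by rewrite ew mulrC (_ : z - 1 = x) //; lia.
rewrite -subr_ge0 in d00; rewrite -subr_ge0 in d11.
rewrite -subr_ge0 in d10; rewrite -subr_ge0 in d01.
have := mulr_ge0 (mulr_ge0 q_ge0 q_ge0) d00.
have := mulr_ge0 (mulr_ge0 p_ge0 p_ge0) d11.
have := mulr_ge0 (mulr_ge0 q_ge0 p_ge0) d10.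
have := mulr_ge0 (mulr_ge0 q_ge0 p_ge0) d01.
lra.
Qed.

(* Multilinearity of the determinant in the rows. *)
Lemma minor3_bern_conv g a1 a2 a3 c1 c2 c3 :
  minor3 (bern_conv q p g) a1 a2 a3 c1 c2 c3 =
    q ^+ 3 * minor3 g a1 a2 a3 c1 c2 c3
  + q ^+ 2 * p * (minor3 g (a1 - 1) a2 a3 c1 c2 c3 + minor3 g a1 (a2 - 1) a3 c1 c2 c3
                  + minor3 g a1 a2 (a3 - 1) c1 c2 c3)
  + q * p ^+ 2 * (minor3 g (a1 - 1) (a2 - 1) a3 c1 c2 c3
                  + minor3 g (a1 - 1) a2 (a3 - 1) c1 c2 c3
                  + minor3 g a1 (a2 - 1) (a3 - 1) c1 c2 c3)
  + p ^+ 3 * minor3 g (a1 - 1) (a2 - 1) (a3 - 1) c1 c2 c3.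
Proof.
have gAC (x y : int) : g (x - y - 1) = g (x - 1 - y) by rewrite addrAC.
by rewrite /minor3 /det3 /bern_conv !gAC; ring.
Qed.

(* Rows of the shifted minors are only weakly increasing; equal rows give 0. *)
Lemma minor3_weak g a1 a2 a3 c1 c2 c3 : PF3 g ->
  a1 <= a2 -> a2 <= a3 -> c1 < c2 -> c2 < c3 -> 0 <= minor3 g a1 a2 a3 c1 c2 c3.
Proof.
move=> H h1 h2 h3 h4.
case: (a1 =P a2) => [<-|n1]; first by rewrite /minor3 /det3; lra.
case: (a2 =P a3) => [<-|n2]; first by rewrite /minor3 /det3; lra.
by apply: H => //; lia.
Qed.

Lemma PF3_bern_conv g : PF3 g -> PF3 (bern_conv q p g).
Proof.
move=> H a1 a2 a3 c1 c2 c3 h1 h2 h3 h4; rewrite minor3_bern_conv.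
have M b1 b2 b3 : b1 <= b2 -> b2 <= b3 -> 0 <= minor3 g b1 b2 b3 c1 c2 c3.
  by move=> *; apply: minor3_weak.
apply: cubic_ge0; try by apply: M; lia.
all: by do 2 (apply: addr_ge0; last by apply: M; lia); apply: M; lia.
Qed.

Lemma form1_win_bern_conv h : admissible h -> 0 <= form1_win (bern_conv q p h).
Proof.
move=> Hh; rewrite /form1_win /bern_conv form1_conv.
apply: cubic_ge0; [exact: adm_form1 Hh 0 | exact: form1_win_mix1_ge0 |
                   exact: form1_win_mix2_ge0 | exact: adm_form1 Hh (-1)].
Qed.

Lemma form2_win_bern_conv h : admissible h -> 0 <= form2_win (bern_conv q p h).
Proof.
move=> Hh; rewrite /form2_win /bern_conv form2_conv.
apply: cubic_ge0; [exact: adm_form2 Hh 0 | exact: form2_win_mix1_ge0 |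
                   exact: form2_win_mix2_ge0 | exact: adm_form2 Hh (-1)].
Qed.

End BernoulliConvolution.

Lemma along_bern_conv F q p g :
  (forall h, admissible h -> 0 <= F (bern_conv q p h)) ->
  admissible g -> along F (bern_conv q p g).
Proof. by move=> H Hg a; rewrite shift_bern_conv; apply/H/admissible_shift. Qed.

Lemma admissible_bern_conv q p g : 0 <= q -> 0 <= p ->
  admissible g -> admissible (bern_conv q p g).
Proof.
move=> hq hp Hg; have Hr := admissible_rev Hg.
split; rewrite ?rev_bern_conv; do ?apply: along_shift.
- exact: nonneg_bern_conv (adm_nonneg Hg).
- exact: nz_bern_conv (adm_nonneg Hg) (adm_nz Hg).
- exact: PF2_bern_conv (adm_nonneg Hg) (adm_PF2 Hg).
- exact: PF3_bern_conv (adm_PF3 Hg).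
- exact: along_bern_conv (form1_win_bern_conv hq hp) Hg.
- exact: along_bern_conv (form1_win_bern_conv hp hq) Hr.
- exact: along_bern_conv (form2_win_bern_conv hq hp) Hg.
- exact: along_bern_conv (form2_win_bern_conv hp hq) Hr.
Qed.

Lemma delta_cross a a' c c' : a < a' -> c < c' -> delta (a - c') * delta (a' - c) = 0.
Proof. by move=> ha hc; rewrite /delta; do 2![case: eqP => ?]; rewrite ?mulr0 ?mul0r //; lia. Qed.

(* The base case: on every window the unit mass has at most one nonzero value. *)
Lemma admissible_delta : admissible delta.
Proof.
have F1 : along form1_win delta.
  by move=> a; rewrite /form1_win /form1 /shift /delta; do 4![case: eqP => ?]; try lia; lra.
have F2 : along form2_win delta.
  by move=> a; rewrite /form2_win /form2 /shift /delta; do 5![case: eqP => ?]; try lia; lra.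
split; rewrite ?rev_delta //.
- by move=> i; rewrite /delta; case: eqP.
- move=> x; rewrite /delta; case: (x =P 0) => [_ /eqP|x0 _]; first by rewrite oner_eq0.
  by case: (ltrP x 0) => hx; [left|right] => y hy; case: (y =P 0) => //; lia.
- move=> w x y z e hx hy; rewrite /delta.
  by do 4![case: eqP => ?]; try lia; lra.
- move=> a1 a2 a3 c1 c2 c3 *; apply: det3_diag_ge0; try by apply: delta_cross; lia.
  by rewrite !mulr_ge0 // /delta; case: eqP.
Qed.

Lemma admissible_poibin (m : nat) (p : 'I_m -> R) :
  (forall i, 0 <= p i <= 1) -> admissible (poibin p).
Proof.
elim: m p => [|m IH] p hp.
  have -> : poibin p = delta by apply: functional_extensionality => k; rewrite poibin_nil.
  exact: admissible_delta.
have -> : poibin p = bern_conv (1 - p ord0) (p ord0) (poibin (fun j => p (lift ord0 j))).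
  by apply: functional_extensionality => k; rewrite poibin_rec.
have /andP[p0 p1] := hp ord0.
by apply: admissible_bern_conv; rewrite ?subr_ge0 //; apply: IH.
Qed.

(* The six inequalities on the window around 0: the first three are forms of
   the invariant (the third on the reflection), the next two add the minor
   with rows and columns 0, 1, 2, and the last is the second mixed coefficient
   of form1 on the reflected window around 1. *)
Lemma admissible_ineqs h : admissible h ->
  0 <= h 0 ^+ 2 * h 1 - 2 * h 1 ^+ 2 * h (-1) + h 2 * h 0 * h (-1) /\
  0 <= h 0 ^+ 3 - h (-1) * h 0 * h 1 - h (-1) ^+ 2 * h 2 + h (-2) * h 0 * h 2 /\
  0 <= h 0 ^+ 3 - h (-1) * h 0 * h 1 - h 1 ^+ 2 * h (-2) + h (-2) * h 0 * h 2 /\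
  0 <= 2 * h 0 ^+ 3 - 3 * h (-1) * h 0 * h 1 + h (-1) ^+ 2 * h 2 /\
  0 <= 2 * h 0 ^+ 3 - 3 * h (-1) * h 0 * h 1 + h 1 ^+ 2 * h (-2) /\
  0 <= 2 * h 0 ^+ 2 * h (-2) - 3 * h (-2) * h (-1) * h 1 + h 1 * h 0 * h (-3).
Proof.
move=> Hh.
have D : 0 <= minor3 h 0 1 2 0 1 2 by apply: (adm_PF3 Hh).
have M := form1_win_mix2_ge0 (admissible_shift 1 (admissible_rev Hh)).
move: (adm_form1 Hh 0) (adm_form2 Hh 0) (adm_form2_rev Hh 0) D M.
rewrite /form1_win /form2_win /form1 /form2 /form1_mix2 /minor3 /det3 /shift /rev.
set t := h (-3); set s := h (-2); set u := h (-1); set v := h 0; set w := h 1; set z := h 2.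
by move=> F1 F2 F3 D M; do 5![split; first lra]; lra.
Qed.

End PoissonBinomialInequalities.

Theorem corollaryA3 (R : realFieldType) (m : nat) (hm : (1 <= m)%N)
    (p : 'I_m -> R) (hp : forall i, 0 <= p i <= 1) (k : int) :
  let g := poibin p in
  0 <= g k ^+ 2 * g (k + 1) - 2 * g (k + 1) ^+ 2 * g (k - 1)
             + g (k + 2) * g k * g (k - 1) /\
      0 <= g k ^+ 3 - g (k - 1) * g k * g (k + 1) - g (k - 1) ^+ 2 * g (k + 2)
             + g (k - 2) * g k * g (k + 2) /\
      0 <= g k ^+ 3 - g (k - 1) * g k * g (k + 1) - g (k + 1) ^+ 2 * g (k - 2)
             + g (k - 2) * g k * g (k + 2) /\
      0 <= 2 * g k ^+ 3 - 3 * g (k - 1) * g k * g (k + 1)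
             + g (k - 1) ^+ 2 * g (k + 2) /\
      0 <= 2 * g k ^+ 3 - 3 * g (k - 1) * g k * g (k + 1)
             + g (k + 1) ^+ 2 * g (k - 2) /\
      0 <= 2 * g k ^+ 2 * g (k - 2) - 3 * g (k - 2) * g (k - 1) * g (k + 1)
             + g (k + 1) * g k * g (k - 3).
Proof.
move=> g.
have := admissible_ineqs (admissible_shift k (admissible_poibin hp)).
by rewrite /shift addr0.
Qed.
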